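(* Let $\lambda$ be a partition, $T\in\mathcal{T}_\lambda$, let $Y\in\mathcal{T}_\lambda$ be a $\lambda$-key, and let $\pi$ be an $R_\lambda$-permutation. Then: (i) $S(T)$ is a $\lambda$-key (in particular $S(T)\in\mathcal{T}_\lambda$); (ii) $T\le S(T)$ and $S(Y)=Y$; (iii) $Y_\lambda(\pi)\in\mathcal{D}_\lambda(\pi)$ and $\mathcal{D}_\lambda(\pi)\subseteq[Y_\lambda(\pi)]$; (iv) $Y_\lambda(\pi)$ is the unique maximal element of $\mathcal{D}_\lambda(\pi)$; (v) the sets $\mathcal{D}_\lambda(\sigma)$, $\sigma$ ranging over the $R_\lambda$-permutations, are nonempty subsets of $\mathcal{T}_\lambda$ and are pairwise distinct.
   Context: Fix $n\ge1$; $[m]=\{1,\dots,m\}$. A partition is $\lambda=(\lambda_1\ge\cdots\ge\lambda_n\ge0)\in\mathbb{Z}^n$, with boxes $(j,i)$ (column $j$, row $i$), $1\le j\le\lambda_1$, $1\le i\le\zeta_j:=\#\{i:\lambda_i\ge j\}$; $R_\lambda:=\{\zeta_j:\zeta_j<n\}$ with elements $q_1<\dots<q_r$, $q_0:=0$, $q_{r+1}:=n$. An $R_\lambda$-permutation is a permutation $\pi$ of $[n]$ in one-line notation that is strictly increasing on each index set $\{q_{h-1}+1,\dots,q_h\}$. A tableau of shape $\lambda$ fills the boxes with values in $[n]$, strictly increasing down columns and weakly increasing along rows; $\mathcal{T}_\lambda$ is their set, ordered entrywise, and $[U]:=\{T\in\mathcal{T}_\lambda:T\le U\}$. $T_j(i)$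 is the entry at column $j$ row $i$; $B(T_j)$ the set of entries of column $j$. A $\lambda$-key is $Y\in\mathcal{T}_\lambda$ with $B(Y_l)\supseteq B(Y_j)$ for $l\le j$. The $\lambda$-key $Y_\lambda(\pi)$ is the tableau whose column $j$ consists of $\{\pi_1,\dots,\pi_{\zeta_j}\}$ in increasing order. Scanning tableau: the earliest weakly increasing subsequence (EWIS) of a sequence $x_1,x_2,\dots$ is $x_{i_1},x_{i_2},\dots$ with $i_1=1$ and $i_u$ the smallest index $>i_{u-1}$ with $x_{i_u}\ge x_{i_{u-1}}$. For $T\in\mathcal{T}_\lambda$ and $l\in[\lambda_1]$, column $l$ of $S(T)$ is computed as follows: consider the boxes of $T$ in columns $l,l+1,\dots,\lambda_1$, all initially unmarked; for $k=\zeta_l,\zeta_l-1,\dots,1$ in turn, form the sequence of the lowest unmarked entries of the columns $l,l+1,\dots$ (from left to right, over the columns still having unmarked boxes; the unmarked boxes always form a partition shape), take its EWIS, mark the boxes contributing to it (this set of boxes is the scanning path $\mathcal{P}(T;l,k)$), and set the entry of $S(T)$ at column $l$, row $k$ to be the last term of this EWIS. The set of Demazure tableaux is $\mathcal{D}_\lambda(\pi):=\{T\in\mathcal{T}_\lambda: S(T)\le Y_\lambda(\pi)\}$. *)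

From mathcomp Require Import all_boot.
Set Implicit Arguments. Unset Strict Implicit. Unset Printing Implicit Defensive.

(* Conventions: a partition lambda is a seq nat of size n (lambda_1 = nth 0 lambda 0).
   A tableau is a seq of columns (left to right); each column is a seq nat listing the
   entries from top (row 1) to bottom.  Internally columns and rows are 0-indexed:
   column c here is column c+1 of the paper, position i of a column is row i+1. *)

Definition is_partition (n : nat) (lam : seq nat) : bool :=
  (size lam == n) && sorted geq lam.

Definition ncols (lam : seq nat) : nat := head 0 lam.

(* zeta_{c+1} = #{ i : lambda_i >= c+1 } *)
Definition zeta (lam : seq nat) (c : nat) : nat := count (fun x => c < x) lam.

Definition entry (T : seq (seq nat)) (c i : nat) : nat := nth 0 (nth [::] T c) i.

Definition is_tab (n : nat) (lam : seq nat) (T : seq (seq nat)) : bool :=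
  [&& size T == ncols lam,
      all (fun c => size (nth [::] T c) == zeta lam c) (iota 0 (ncols lam)),
      all (fun col => all (fun x => (1 <= x) && (x <= n)) col) T,
      all (fun col => sorted ltn col) T &
      all (fun c => all (fun i => entry T c i <= entry T c.+1 i) (iota 0 (zeta lam c.+1)))
          (iota 0 (ncols lam).-1)].

Definition tab_le (T U : seq (seq nat)) : bool := all2 (fun a b => all2 leq a b) T U.

Definition is_key (n : nat) (lam : seq nat) (Y : seq (seq nat)) : bool :=
  is_tab n lam Y &&
  all (fun j => all (fun l => (l <= j) ==> all (fun x => x \in nth [::] Y l) (nth [::] Y j))
                    (iota 0 (ncols lam)))
      (iota 0 (ncols lam)).

Definition Rset (n : nat) (lam : seq nat) : seq nat :=
  [seq zeta lam c | c <- iota 0 (ncols lam) & zeta lam c < n].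

Definition qseq (n : nat) (lam : seq nat) : seq nat :=
  0 :: rcons (sort leq (undup (Rset n lam))) n.

(* pi (one-line notation, pi_a = nth 0 pi a.-1) is a permutation of [n] strictly
   increasing on each block {q_{h-1}+1, ..., q_h} *)
Definition is_Rperm (n : nat) (lam : seq nat) (pi : seq nat) : Prop :=
  perm_eq pi (iota 1 n) /\
  forall h, h.+1 < size (qseq n lam) ->
    forall a b, nth 0 (qseq n lam) h < a -> a < b -> b <= nth 0 (qseq n lam) h.+1 ->
      nth 0 pi a.-1 < nth 0 pi b.-1.

Definition Ykey (lam : seq nat) (pi : seq nat) : seq (seq nat) :=
  mkseq (fun c => sort leq (take (zeta lam c) pi)) (ncols lam).

Fixpoint ewis_from (last : nat) (s : seq (nat * nat)) : seq (nat * nat) :=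
  match s with
  | [::] => [::]
  | x :: s' => if last <= x.2 then x :: ewis_from x.2 s' else ewis_from last s'
  end.

Definition ewis (s : seq (nat * nat)) : seq (nat * nat) :=
  match s with
  | [::] => [::]
  | x :: s' => x :: ewis_from x.2 s'
  end.

(* cols : the columns l, l+1, ... of T; hs : numbers of unmarked boxes of each column
   (the unmarked boxes of a column are its top hs_c boxes). *)
Definition lowest (cols : seq (seq nat)) (hs : seq nat) : seq (nat * nat) :=
  [seq (c, nth 0 (nth [::] cols c) (nth 0 hs c).-1) | c <- iota 0 (size cols) & 0 < nth 0 hs c].

Definition scan_path (cols : seq (seq nat)) (hs : seq nat) : seq (nat * nat) :=
  ewis (lowest cols hs).

Definition mark (cols : seq (seq nat)) (hs : seq nat) : seq nat :=
  [seq (if c \in map fst (scan_path cols hs) then (nth 0 hs c).-1 else nth 0 hs c)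
  | c <- iota 0 (size cols)].

Fixpoint scan_iter (k : nat) (cols : seq (seq nat)) (hs : seq nat) : seq nat :=
  match k with
  | 0 => [::]
  | k'.+1 => last 0 (map snd (scan_path cols hs)) :: scan_iter k' cols (mark cols hs)
  end.

(* column l of S(T): the scans are for k = zeta_l, ..., 1, so reverse to list rows 1..zeta_l *)
Definition scan_col (T : seq (seq nat)) (l : nat) : seq nat :=
  let cols := drop l T in
  rev (scan_iter (size (nth [::] T l)) cols (map size cols)).

Definition scan (T : seq (seq nat)) : seq (seq nat) := mkseq (scan_col T) (size T).

Definition in_D (n : nat) (lam : seq nat) (pi : seq nat) (T : seq (seq nat)) : bool :=
  is_tab n lam T && tab_le (scan T) (Ykey lam pi).

Definition in_ideal (n : nat) (lam : seq nat) (U T : seq (seq nat)) : bool :=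
  is_tab n lam T && tab_le T U.

From mathcomp Require Import all_boot zify.
Set Implicit Arguments. Unset Strict Implicit. Unset Printing Implicit Defensive.

(* Appending a column on the right of the columns already scanned changes the outputs
   of the successive scans by a simple rule: each scan in turn either takes the lowest
   unmarked entry of the new column, when its output does not exceed it, or passes.
   So column l of S(T) arises from column l of T by pushing the columns l+1, l+2, ...
   through it.  Pushing a column only raises the outputs, keeps them strictly
   decreasing, only brings in entries of that column and is monotone for inclusion;
   and once the outputs contain a column C, pushing the column to the right of C in a
   tableau picks up all its entries (a Hall-type count).  Hence the columns of S(T) are
   nested sets, S(T) is a key above T, and for a key Y each column of S(Y) is a subset
   of the same size of the column of Y, so S(Y) = Y.
   Then D(pi) lies in [Y(pi)] and contains Y(pi) = S(Y(pi)).  Finally D(sigma) = D(tau)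
   forces Y(sigma) = Y(tau); the columns of Y(sigma) determine the sets
   {sigma_1, ..., sigma_{q_h}}, hence sigma, which increases on each block. *)

Lemma all2_nth (S T : Type) (x0 : S) (y0 : T) (r : S -> T -> bool) s t :
  size s = size t -> (forall i, i < size s -> r (nth x0 s i) (nth y0 t i)) -> all2 r s t.
Proof.
elim: s t => [|x s IH] [|y t] //= [Hst] H; apply/andP; split; first exact: (H 0).
by apply: IH => // i Hi; apply: (H i.+1).
Qed.

Section All2Order.
Variables (T : Type) (r : rel T).

Lemma all2_refl : reflexive r -> reflexive (all2 r).
Proof. by move=> Hr; elim=> //= x s ->; rewrite Hr. Qed.

Lemma all2_trans : transitive r -> transitive (all2 r).
Proof.
move=> Hr t s u; elim: s t u => [|x s IH] [|y t] [|z u] //= /andP[xy st] /andP[yz tu].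
by rewrite (Hr _ _ _ xy yz) (IH t).
Qed.

Lemma all2_anti : antisymmetric r -> antisymmetric (all2 r).
Proof.
move=> Hr s t; elim: s t => [|x s IH] [|y t] //= /andP[/andP[xy st] /andP[yx ts]].
by rewrite (Hr x y) ?xy ?yx // (IH t) ?st.
Qed.

End All2Order.

Lemma tab_le_refl : reflexive tab_le.
Proof. exact: all2_refl (all2_refl leqnn). Qed.

Lemma tab_le_trans : transitive tab_le.
Proof. exact: all2_trans (all2_trans leq_trans). Qed.

Lemma tab_le_anti : antisymmetric tab_le.
Proof. exact: all2_anti (all2_anti anti_leq). Qed.

Lemma count_subset_uniq (T : eqType) (P : pred T) (A B : seq T) :
  uniq A -> {subset A <= B} -> count P A <= count P B.
Proof.
move=> uA sAB; rewrite -!size_filter; apply: uniq_leq_size; first exact: filter_uniq.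
by move=> x; rewrite !mem_filter => /andP[-> /sAB].
Qed.

Lemma gtn_trans : transitive gtn.
Proof. exact: rev_trans ltn_trans. Qed.

Lemma sorted_ltn_nth_lt s i j : sorted ltn s -> i < j -> j < size s -> nth 0 s i < nth 0 s j.
Proof.
move=> Hs Hij Hj; apply: (sorted_ltn_nth ltn_trans) => //; rewrite inE //.
exact: ltn_trans Hij Hj.
Qed.

Lemma count_le_nth s i : sorted ltn s -> i < size s -> i < count (fun x => x <= nth 0 s i) s.
Proof.
elim: s i => //= x s IH [|i] Hs Hi /=; first by rewrite leqnn.
move: Hs; rewrite (path_sortedE ltn_trans) => /andP[/allP Hx Hs].
by rewrite (ltnW (Hx _ (mem_nth 0 Hi))) add1n ltnS; apply: IH.
Qed.

Lemma nth_le_of_count s v i : sorted ltn s -> i < count (fun x => x <= v) s -> nth 0 s i <= v.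
Proof.
elim: s i => //= x s IH i; rewrite (path_sortedE ltn_trans) => /andP[/allP Hx Hs].
case: (leqP x v) => xv; first by case: i => [|i] //=; rewrite add1n ltnS; apply: IH.
suff -> : count (fun x => x <= v) s = 0 by [].
apply/eqP; rewrite -leqn0 leqNgt -has_count; apply/hasPn => y /Hx xy.
by rewrite -ltnNge (ltn_trans xv).
Qed.

Lemma nth_le_subset_sorted A B i : sorted ltn A -> sorted ltn B -> {subset A <= B} ->
  i < size A -> nth 0 B i <= nth 0 A i.
Proof.
move=> HA HB sAB Hi; apply: nth_le_of_count => //.
apply: leq_trans (count_le_nth HA Hi) _.
by apply: count_subset_uniq => //; exact: (sorted_uniq ltn_trans ltnn HA).
Qed.

(** * Scanning column by column *)

(* [scan_push o D h]: [o] lists the outputs of the successive scans of some columns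
   (first scan first) and a column [D], of which the top [h] boxes are unmarked, is
   appended on the right; each scan in turn extends its path into [D] iff its output
   does not exceed the lowest unmarked entry of [D]. *)
Fixpoint scan_push (o D : seq nat) (h : nat) : seq nat :=
  match o with
  | [::] => [::]
  | x :: o' => if (0 < h) && (x <= nth 0 D h.-1) then nth 0 D h.-1 :: scan_push o' D h.-1
               else x :: scan_push o' D h
  end.

Definition scan_push_cols (o : seq nat) (cs : seq (seq nat)) : seq nat :=
  foldl (fun o D => scan_push o D (size D)) o cs.

Lemma ewis_from_rcons t s x : ewis_from t (rcons s x) =
  if last t (map snd (ewis_from t s)) <= x.2 then rcons (ewis_from t s) x else ewis_from t s.
Proof. by elim: s t => [|y s IH] t //=; case: ifP => _ //=; rewrite IH //=; case: ifP. Qed.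

Lemma ewisE s : ewis s = ewis_from 0 s.
Proof. by case: s. Qed.

Lemma mem_ewis_from t s y : y \in ewis_from t s -> y \in s.
Proof.
elim: s t => [|z s IH] t //=; case: ifP => _; rewrite !inE.
  by case/orP=> [->|/IH ->]; rewrite ?orbT.
by move/IH ->; rewrite orbT.
Qed.

Section AppendColumn.
Variables (cols : seq (seq nat)) (hs : seq nat) (D : seq nat) (h : nat).
Hypothesis size_hs : size hs = size cols.

Let iota_rcons : iota 0 (size cols).+1 = iota 0 (size cols) ++ [:: size cols].
Proof. by rewrite -addn1 iotaD. Qed.

Let nth_hs c : c < size cols -> nth 0 (rcons hs h) c = nth 0 hs c.
Proof. by move=> Hc; rewrite nth_rcons size_hs Hc. Qed.

Let nth_hs_last : nth 0 (rcons hs h) (size cols) = h.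
Proof. by rewrite nth_rcons size_hs ltnn eqxx. Qed.

Lemma lowest_rcons : lowest (rcons cols D) (rcons hs h) =
  lowest cols hs ++ (if 0 < h then [:: (size cols, nth 0 D h.-1)] else [::]).
Proof.
rewrite /lowest size_rcons iota_rcons filter_cat map_cat /= nth_hs_last.
congr (_ ++ _).
  rewrite (@eq_in_filter _ _ (fun c => 0 < nth 0 hs c)); last first.
    by move=> c; rewrite mem_iota /= => Hc; rewrite nth_hs.
  apply/eq_in_map => c; rewrite mem_filter mem_iota /= => /andP[_ Hc].
  by rewrite nth_hs // nth_rcons Hc.
by case: ifP => //= _; rewrite nth_hs_last nth_rcons ltnn eqxx.
Qed.

Lemma scan_path_rcons : scan_path (rcons cols D) (rcons hs h) =
  if (0 < h) && (last 0 (map snd (scan_path cols hs)) <= nth 0 D h.-1)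
  then rcons (scan_path cols hs) (size cols, nth 0 D h.-1) else scan_path cols hs.
Proof.
rewrite /scan_path lowest_rcons; case: h => [|h'] /=; first by rewrite cats0.
by rewrite cats1 !ewisE ewis_from_rcons.
Qed.

Lemma scan_path_col_lt c : c \in map fst (scan_path cols hs) -> c < size cols.
Proof.
case/mapP=> [[c' v]] + /= ->; rewrite /scan_path ewisE => /mem_ewis_from.
by case/mapP=> c''; rewrite mem_filter mem_iota /= => /andP[_ Hc] [-> _].
Qed.

Lemma mark_rcons : mark (rcons cols D) (rcons hs h) =
  rcons (mark cols hs)
    (if (0 < h) && (last 0 (map snd (scan_path cols hs)) <= nth 0 D h.-1) then h.-1 else h).
Proof.
rewrite /mark scan_path_rcons size_rcons iota_rcons map_cat cats1 /= nth_hs_last.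
case: ifP => _.
  rewrite map_rcons mem_rcons inE eqxx; congr rcons.
  apply/eq_in_map => c; rewrite mem_iota /= => Hc.
  by rewrite nth_hs // mem_rcons inE (ltn_eqF Hc).
congr rcons; first by apply/eq_in_map => c; rewrite mem_iota /= => Hc; rewrite nth_hs.
by case: (boolP (size cols \in _)) => // /scan_path_col_lt; rewrite ltnn.
Qed.

End AppendColumn.

Lemma size_mark cols hs : size (mark cols hs) = size cols.
Proof. by rewrite /mark size_map size_iota. Qed.

Lemma scan_iter_rcons k cols hs D h : size hs = size cols ->
  scan_iter k (rcons cols D) (rcons hs h) = scan_push (scan_iter k cols hs) D h.
Proof.
elim: k hs h => [|k IH] hs h Hs //=.
rewrite mark_rcons // IH ?size_mark ?Hs // scan_path_rcons //.
by case: ifP => //=; rewrite map_rcons last_rcons.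
Qed.

Lemma scan_iter_push_cols k cols :
  scan_iter k cols (map size cols) = scan_push_cols (nseq k 0) cols.
Proof.
elim/last_ind: cols => [|cols D IH]; first by elim: k => //= k ->.
by rewrite map_rcons scan_iter_rcons ?size_map // IH /scan_push_cols foldl_rcons.
Qed.

Lemma scan_push_nseq0 C h : h <= size C -> scan_push (nseq h 0) C h = rev (take h C).
Proof.
elim: h => [|h IH] Hh /=; first by rewrite take0.
by rewrite IH ?(ltnW Hh) // (take_nth 0 Hh) rev_rcons.
Qed.

(* The outputs of the scans computing column [l] of [S(T)], bottom row first. *)
Definition scan_outputs (T : seq (seq nat)) (l : nat) : seq nat :=
  scan_push_cols (rev (nth [::] T l)) (drop l.+1 T).

Lemma nth_scan T l : l < size T -> nth [::] (scan T) l = rev (scan_outputs T l).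
Proof.
move=> Hl; rewrite nth_mkseq // /scan_col scan_iter_push_cols (drop_nth [::] Hl) /=.
by rewrite scan_push_nseq0 // take_size.
Qed.

Lemma size_scan T : size (scan T) = size T.
Proof. by rewrite size_mkseq. Qed.

Lemma size_scan_push o D h : size (scan_push o D h) = size o.
Proof. by elim: o h => //= x o IH h; case: ifP => _ /=; rewrite IH. Qed.

Lemma nth_scan_push_ge o D h i : nth 0 o i <= nth 0 (scan_push o D h) i.
Proof.
elim: o h i => [|x o IH] h [|i] //=; case: ifP => [/andP[_ //]|_] //=; exact: IH.
Qed.

Lemma mem_scan_push o D h y : y \in scan_push o D h ->
  y \in o \/ exists2 i, i < h & y = nth 0 D i.
Proof.
elim: o h => //= x o IH h; case: ifP => [/andP[h0 _]|_]; rewrite inE => /orP[/eqP->|/IH].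
- by right; exists h.-1; rewrite // prednK.
- case=> [Hy|[i Hi ->]]; first by left; rewrite inE Hy orbT.
  by right; exists i => //; apply: leq_trans Hi (leq_pred _).
- by left; rewrite inE eqxx.
- case=> [Hy|[i Hi ->]]; first by left; rewrite inE Hy orbT.
  by right; exists i.
Qed.

Lemma sorted_scan_push o D h : sorted gtn o -> sorted ltn D -> h <= size D ->
  sorted gtn (scan_push o D h).
Proof.
elim: o h => //= x o IH h; rewrite (path_sortedE gtn_trans) => /andP[/allP Hx Ho] HD Hh.
case: ifP => [/andP[h0 xD]|xD]; rewrite /= (path_sortedE gtn_trans).
  rewrite IH // ?(leq_trans (leq_pred _) Hh) // andbT.
  apply/allP => y /mem_scan_push [/Hx yx|[i Hi ->]]; first exact: leq_trans yx xD.
  by apply: sorted_ltn_nth_lt; rewrite ?prednK.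
rewrite IH // andbT; apply/allP => y /mem_scan_push [/Hx //|[i Hi ->]] /=.
have h0 : 0 < h by case: (h) Hi.
have Dx : nth 0 D h.-1 < x by move: xD; rewrite h0 /= => /negbT; rewrite -ltnNge.
apply: leq_ltn_trans Dx; have : i <= h.-1 by rewrite -ltnS prednK.
rewrite leq_eqVlt => /orP[/eqP-> //|{}Hi].
by apply: ltnW; apply: sorted_ltn_nth_lt; rewrite ?prednK.
Qed.

Lemma subset_behead_lt (x : nat) (X Y : seq nat) : {subset Y <= x :: X} -> (forall z, z \in Y -> z < x) ->
  {subset Y <= X}.
Proof.
move=> sYX Yx z Hz; have := sYX z Hz; rewrite inE => /orP[/eqP Ez|//].
by have := Yx z Hz; rewrite Ez ltnn.
Qed.

Lemma scan_push_subset X Y D h : sorted gtn X -> sorted gtn Y -> {subset Y <= X} ->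
  {subset scan_push Y D h <= scan_push X D h}.
Proof.
elim: X Y h => [|x X IH] [|y Y] h //=.
  by move=> _ _ /(_ y); rewrite inE eqxx => /(_ isT).
rewrite !(path_sortedE gtn_trans) => /andP[/allP Xx HX] /andP[/allP Yy HY] sYX.
have yX : y \in x :: X by apply: sYX; rewrite inE eqxx.
have Yx z : z \in Y -> z < x.
  by move=> /Yy zy; move: yX; rewrite inE => /orP[/eqP<-//|/Xx]; apply: ltn_trans.
have sYX' := subset_behead_lt (fun z Hz => sYX z (mem_behead Hz)) Yx.
case: (eqVneq y x) => [->|nyx].
  by case: ifP => _ z; rewrite !inE => /orP[->//|Hz]; rewrite (IH Y) ?orbT.
have yx : y < x by move: yX; rewrite inE (negbTE nyx) => /Xx.
have syYX : {subset y :: Y <= X}.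
  by apply: subset_behead_lt sYX _ => z; rewrite inE => /orP[/eqP->//|/Yx].
case Ex: ((0 < h) && (x <= nth 0 D h.-1)).
  case/andP: Ex => h0 xD; rewrite h0 (leq_trans (ltnW yx) xD) /= => z.
  by rewrite !inE => /orP[->//|Hz]; rewrite (IH Y) ?orbT.
move=> z Hz; rewrite inE (IH (y :: Y)) ?orbT //=.
by rewrite (path_sortedE gtn_trans) HY andbT; apply/allP.
Qed.

Lemma mem_scan_push_nth o D h : sorted gtn o -> sorted ltn D -> h <= size D ->
  (forall i, i < h -> i < count (fun x => x <= nth 0 D i) o) ->
  forall i, i < h -> nth 0 D i \in scan_push o D h.
Proof.
elim: o h => [|x o IH] h Ho HD Hh Hall i Hi /=.
  by case: h Hh Hi Hall => // h _ _ /(_ 0 isT).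
move: Ho; rewrite /= (path_sortedE gtn_trans) => /andP[/allP Hx Ho].
case: h Hh Hall Hi => // h Hh Hall Hi.
have lt_D j : j < h -> nth 0 D j < nth 0 D h by move=> Hj; apply: sorted_ltn_nth_lt.
case: (leqP x (nth 0 D h)) => xD /=; rewrite inE.
  move: Hi; rewrite ltnS leq_eqVlt => /orP[/eqP->|ih]; first by rewrite eqxx.
  suff Hall' j : j < h -> j < count (fun y => y <= nth 0 D j) o.
    by rewrite (IH h Ho HD (ltnW Hh) Hall' i ih) orbT.
  move=> Hj; have := Hall j (leqW Hj); rewrite /=.
  case: (leqP x (nth 0 D j)) => xj; last by rewrite add0n.
  have -> : count (fun y => y <= nth 0 D j) o = size o.
    by apply/eqP; rewrite -all_count; apply/allP => y /Hx /ltnW /leq_trans; apply.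
  have := Hall h (ltnSn h); rewrite /= xD /= ltnS => Hho _.
  exact: leq_trans Hj (leq_trans Hho (count_size _ _)).
suff Hall' j : j < h.+1 -> j < count (fun y => y <= nth 0 D j) o.
  by rewrite (IH h.+1 Ho HD Hh Hall' i Hi) orbT.
move=> Hj; have := Hall j Hj; rewrite /=.
suff -> : (x <= nth 0 D j) = false by [].
apply/negbTE; rewrite -ltnNge; apply: leq_ltn_trans xD.
by move: Hj; rewrite ltnS leq_eqVlt => /orP[/eqP->|/lt_D/ltnW].
Qed.

Definition row_le (D0 D : seq nat) : bool :=
  (size D <= size D0) && all (fun i => nth 0 D0 i <= nth 0 D i) (iota 0 (size D)).

Lemma scan_push_row_le o D0 D : sorted gtn o -> sorted ltn D0 -> sorted ltn D ->
  {subset D0 <= o} -> row_le D0 D -> {subset D <= scan_push o D (size D)}.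
Proof.
move=> Ho HD0 HD sD0o /andP[sz_le /allP le_D0D] y Hy.
rewrite -(nth_index 0 Hy); apply: mem_scan_push_nth; rewrite ?index_mem // => i Hi.
apply: leq_trans (count_le_nth HD0 (leq_trans Hi sz_le)) _.
apply: leq_trans (count_subset_uniq _ (sorted_uniq ltn_trans ltnn HD0) sD0o).
by apply: sub_count => x /= /leq_trans; apply; apply: le_D0D; rewrite mem_iota.
Qed.

Lemma size_scan_push_cols o cs : size (scan_push_cols o cs) = size o.
Proof. by elim: cs o => //= D cs IH o; rewrite IH size_scan_push. Qed.

Lemma nth_scan_push_cols_ge o cs i : nth 0 o i <= nth 0 (scan_push_cols o cs) i.
Proof. by elim: cs o => //= D cs IH o; apply: leq_trans (IH _); apply: nth_scan_push_ge. Qed.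

Lemma mem_scan_push_cols o cs y : y \in scan_push_cols o cs ->
  y \in o \/ exists2 D, D \in cs & y \in D.
Proof.
elim: cs o => [|D cs IH] o /=; first by left.
case/IH => [/mem_scan_push [|[i Hi ->]]|[D' HD' HyD']]; first by left.
- by right; exists D; rewrite ?inE ?eqxx // mem_nth.
- by right; exists D' => //; rewrite inE HD' orbT.
Qed.

Lemma sorted_scan_push_cols o cs : sorted gtn o -> all (sorted ltn) cs ->
  sorted gtn (scan_push_cols o cs).
Proof.
by elim: cs o => //= D cs IH o Ho /andP[HD Hcs]; apply: IH => //; apply: sorted_scan_push.
Qed.

Lemma scan_push_cols_subset X Y cs : sorted gtn X -> sorted gtn Y -> {subset Y <= X} ->
  all (sorted ltn) cs -> {subset scan_push_cols Y cs <= scan_push_cols X cs}.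
Proof.
elim: cs X Y => //= D cs IH X Y HX HY sYX /andP[HD Hcs].
by apply: IH; rewrite ?sorted_scan_push //; apply: scan_push_subset.
Qed.

Lemma size_scan_outputs T l : size (scan_outputs T l) = size (nth [::] T l).
Proof. by rewrite size_scan_push_cols size_rev. Qed.

(** * Scanning tableaux *)

Lemma zeta_anti lam c c' : c <= c' -> zeta lam c' <= zeta lam c.
Proof. by move=> le_cc'; apply: sub_count => x /=; apply: leq_ltn_trans. Qed.

Section Tableau.
Variables (n : nat) (lam : seq nat) (T : seq (seq nat)).
Hypothesis HT : is_tab n lam T.

Lemma size_tab : size T = ncols lam.
Proof. by case/and5P: HT => /eqP. Qed.

Lemma size_tab_col c : c < size T -> size (nth [::] T c) = zeta lam c.
Proof.
case/and5P: HT => /eqP Hs /allP H _ _ _ Hc; apply/eqP/H.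
by rewrite mem_iota -Hs.
Qed.

Lemma tab_entry_bound c x : x \in nth [::] T c -> 0 < x <= n.
Proof.
case/and5P: HT => _ _ /allP H _ _.
case: (ltnP c (size T)) => Hc; last by rewrite nth_default.
exact: (allP (H _ (mem_nth [::] Hc))).
Qed.

Lemma all_sorted_tab : all (sorted ltn) T.
Proof. by case/and5P: HT. Qed.

Lemma sorted_tab_col c : sorted ltn (nth [::] T c).
Proof.
case: (ltnP c (size T)) => Hc; last by rewrite nth_default.
exact: (allP all_sorted_tab _ (mem_nth [::] Hc)).
Qed.

Lemma row_le_tab c : c.+1 < size T -> row_le (nth [::] T c) (nth [::] T c.+1).
Proof.
move=> Hc; case/and5P: HT => /eqP Hs _ _ _ /allP H.
rewrite /row_le !size_tab_col ?(ltnW Hc) // zeta_anti ?leqnSn //=.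
apply/allP => i Hi; have := H c; rewrite mem_iota -Hs add0n.
have -> : c < (size T).-1 by rewrite -ltnS prednK //; apply: leq_ltn_trans Hc.
by move/(_ isT)/allP/(_ i Hi).
Qed.

Let sorted_rev_col c : sorted gtn (rev (nth [::] T c)).
Proof. by rewrite rev_sorted sorted_tab_col. Qed.

Let all_sorted_drop l : all (sorted ltn) (drop l T).
Proof. by apply/allP => D /mem_drop; apply: (allP all_sorted_tab). Qed.

Lemma sorted_scan_outputs l : sorted gtn (scan_outputs T l).
Proof. exact: sorted_scan_push_cols (sorted_rev_col l) (all_sorted_drop l.+1). Qed.

Lemma mem_scan_outputs l y : y \in scan_outputs T l ->
  exists c, [/\ l <= c, c < size T & y \in nth [::] T c].
Proof.
case/mem_scan_push_cols => [|[D /(nthP [::]) [k Hk <-] Hy]].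
  rewrite mem_rev => Hy; exists l; split => //.
  by case: (ltnP l (size T)) => Hl //; move: Hy; rewrite nth_default.
rewrite size_drop in Hk; exists (l.+1 + k); split; first by lia.
- by rewrite -ltn_subRL.
- by rewrite -nth_drop.
Qed.

Lemma scan_outputs_ge l i : i < size (nth [::] T l) ->
  nth 0 (nth [::] T l) i <= nth 0 (rev (scan_outputs T l)) i.
Proof.
move=> Hi; rewrite nth_rev size_scan_outputs //.
have := nth_scan_push_cols_ge (rev (nth [::] T l)) (drop l.+1 T) (size (nth [::] T l) - i.+1).
by rewrite nth_rev ?size_rev; [rewrite subnSK // subKn // ltnW|lia].
Qed.

Lemma scan_outputs_subset l : l.+1 < size T ->
  {subset scan_outputs T l.+1 <= scan_outputs T l}.
Proof.
move=> Hl; rewrite /scan_outputs (drop_nth [::] Hl) /=.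
apply: scan_push_cols_subset => //.
  exact: sorted_scan_push (sorted_rev_col l) (sorted_tab_col _) (leqnn _).
have sub_rev : {subset nth [::] T l <= rev (nth [::] T l)} by move=> z; rewrite mem_rev.
move=> y; rewrite mem_rev.
exact: scan_push_row_le (sorted_rev_col l) (sorted_tab_col l) (sorted_tab_col l.+1) sub_rev
  (row_le_tab Hl) y.
Qed.

Lemma sorted_scan_col l : sorted ltn (nth [::] (scan T) l).
Proof.
case: (ltnP l (size T)) => Hl; last by rewrite nth_default ?size_scan.
by rewrite nth_scan // rev_sorted sorted_scan_outputs.
Qed.

Lemma scan_col_subset l j : l <= j -> j < size T ->
  {subset nth [::] (scan T) j <= nth [::] (scan T) l}.
Proof.
move=> /subnKC <-; elim: (j - l) => [|d IH] Hd; first by rewrite addn0.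
rewrite addnS in Hd *; move=> y Hy; apply: IH; first exact: ltnW.
by move: Hy; rewrite !nth_scan ?(ltnW Hd) // !mem_rev; apply: scan_outputs_subset.
Qed.

End Tableau.

Lemma key_of_nested_cols n lam Y :
  size Y = ncols lam ->
  (forall c, c < ncols lam -> size (nth [::] Y c) = zeta lam c) ->
  (forall c x, c < ncols lam -> x \in nth [::] Y c -> 0 < x <= n) ->
  (forall c, c < ncols lam -> sorted ltn (nth [::] Y c)) ->
  (forall l j, l <= j -> j < ncols lam -> {subset nth [::] Y j <= nth [::] Y l}) ->
  is_key n lam Y.
Proof.
move=> sizeY size_col bound sorted_col nested.
have mem_cols (P : pred (seq nat)) : (forall c, c < ncols lam -> P (nth [::] Y c)) -> all P Y.
  by move=> HP; apply/allP => _ /(nthP [::]) [c Hc <-]; apply: HP; rewrite -sizeY.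
apply/andP; split; last first.
  apply/allP => j; rewrite mem_iota => /andP[_ Hj]; apply/allP => l _.
  by apply/implyP => le_lj; apply/allP => x /nested; apply.
apply/and5P; split; first by rewrite sizeY.
- by apply/allP => c; rewrite mem_iota => /andP[_ Hc]; rewrite size_col.
- by apply: mem_cols => c Hc; apply/allP => x /bound; apply.
- by apply: mem_cols.
apply/allP => c; rewrite mem_iota add0n => /andP[_ Hc]; apply/allP => i.
rewrite mem_iota add0n => /andP[_ Hi]; have Hc1 : c.+1 < ncols lam by case: (ncols lam) Hc.
apply: nth_le_subset_sorted; rewrite ?size_col ?sorted_col ?(ltnW Hc1) //.
exact: nested (leqnSn c) Hc1.
Qed.

Lemma key_col_subset n lam Y l j : is_key n lam Y -> l <= j -> j < size Y ->
  {subset nth [::] Y j <= nth [::] Y l}.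
Proof.
case/andP=> HY /allP nested le_lj Hj x; rewrite (size_tab HY) in Hj.
have in_cols k : k < ncols lam -> k \in iota 0 (ncols lam) by rewrite mem_iota.
move: (nested j (in_cols _ Hj)) => /allP/(_ l (in_cols _ (leq_ltn_trans le_lj Hj))).
by rewrite le_lj => /allP; apply.
Qed.

Lemma scan_is_key n lam T : is_tab n lam T -> is_key n lam (scan T).
Proof.
move=> HT; have sizeT := size_tab HT; apply: key_of_nested_cols.
- by rewrite size_scan.
- move=> c; rewrite -sizeT => Hc.
  by rewrite nth_scan // size_rev size_scan_outputs // (size_tab_col HT).
- move=> c x; rewrite -sizeT => Hc; rewrite nth_scan // mem_rev => /(mem_scan_outputs HT) [c' [_ _ Hx]].
  exact: (tab_entry_bound HT Hx).
- by move=> c _; apply: (sorted_scan_col HT).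
- by rewrite -sizeT; apply: (scan_col_subset HT).
Qed.

Lemma tab_le_scan n lam T : is_tab n lam T -> tab_le T (scan T).
Proof.
move=> HT; apply: (@all2_nth _ _ [::] [::]) => [|c Hc]; first by rewrite size_scan.
rewrite nth_scan //; apply: (@all2_nth _ _ 0 0); first by rewrite size_rev size_scan_outputs.
exact: (scan_outputs_ge HT).
Qed.

Lemma scan_key n lam Y : is_key n lam Y -> scan Y = Y.
Proof.
move=> HK; have HY : is_tab n lam Y by case/andP: HK.
apply: (@eq_from_nth _ [::]); rewrite size_scan // => c Hc.
have uniq_out : uniq (rev (scan_outputs Y c)).
  by rewrite rev_uniq (sorted_uniq gtn_trans (@ltnn)) ?(sorted_scan_outputs HY).
have sub_col : {subset rev (scan_outputs Y c) <= nth [::] Y c}.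
  move=> y; rewrite mem_rev => /(mem_scan_outputs HY) [c' [le_cc' Hc' Hy]].
  exact: key_col_subset HK le_cc' Hc' y Hy.
rewrite nth_scan //; apply: (irr_sorted_eq ltn_trans ltnn).
- by rewrite rev_sorted (sorted_scan_outputs HY).
- exact: (sorted_tab_col HY).
have size_le : size (nth [::] Y c) <= size (rev (scan_outputs Y c)).
  by rewrite size_rev size_scan_outputs.
by have [_] := uniq_min_size uniq_out sub_col size_le.
Qed.

(** * The keys Y_lambda(pi) *)

Lemma Ykey_key n lam pi : size lam = n -> perm_eq pi (iota 1 n) -> is_key n lam (Ykey lam pi).
Proof.
move=> size_lam pi_perm; have size_pi : size pi = n by rewrite (perm_size pi_perm) size_iota.
have zeta_le c : zeta lam c <= size pi by rewrite size_pi -size_lam count_size.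
apply: key_of_nested_cols => [|c Hc|c x Hc|c Hc|l j le_lj Hj x]; rewrite ?size_mkseq //.
- by rewrite nth_mkseq // size_sort size_takel.
- by rewrite nth_mkseq // mem_sort => /mem_take; rewrite (perm_mem pi_perm) mem_iota add1n.
- rewrite nth_mkseq // ltn_sorted_uniq_leq sort_uniq (sort_sorted leq_total) andbT.
  by rewrite take_uniq // (perm_uniq pi_perm) iota_uniq.
rewrite !nth_mkseq ?(leq_ltn_trans le_lj Hj) // !mem_sort.
by rewrite -(take_takel pi (zeta_anti lam le_lj)); apply: mem_take.
Qed.

Lemma Ykey_in_D n lam pi : size lam = n -> perm_eq pi (iota 1 n) -> in_D n lam pi (Ykey lam pi).
Proof.
move=> size_lam pi_perm; have /andP[HY _] := Ykey_key size_lam pi_perm.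
by rewrite /in_D HY (scan_key (Ykey_key size_lam pi_perm)) tab_le_refl.
Qed.

Lemma tab_le_Ykey_of_D n lam pi U : in_D n lam pi U -> tab_le U (Ykey lam pi).
Proof. by case/andP=> HU; apply: tab_le_trans (tab_le_scan HU). Qed.

Lemma perm_take_Ykey lam s t c : Ykey lam s = Ykey lam t -> c < ncols lam ->
  perm_eq (take (zeta lam c) s) (take (zeta lam c) t).
Proof.
move=> /(congr1 (nth [::] ^~ c)) eq_col Hc.
by apply/(perm_sortP leq_total leq_trans anti_leq); move: eq_col; rewrite !nth_mkseq.
Qed.

Section Blocks.
Variables (n : nat) (lam : seq nat).

Local Notation q := (qseq n lam).

Lemma sorted_qseq : sorted leq q.
Proof.
rewrite /qseq /= rcons_path (path_sortedE leq_trans) (sort_sorted leq_total) andbT.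
apply/andP; split; first by apply/allP.
have := mem_last 0 (sort leq (undup (Rset n lam))); rewrite inE => /orP[/eqP->//|].
by rewrite mem_sort mem_undup => /mapP [c]; rewrite mem_filter => /andP[/ltnW le_cn _ ->].
Qed.

Lemma nth_qseq_last : nth 0 q (size q).-1 = n.
Proof. by rewrite /qseq /= size_rcons /= nth_rcons ltnn eqxx. Qed.

Lemma nth_qseq h : 0 < h < size q ->
  (exists2 c, c < ncols lam & nth 0 q h = zeta lam c) \/ nth 0 q h = n.
Proof.
case: h => // h; rewrite /qseq /= size_rcons !ltnS nth_rcons leq_eqVlt.
case/orP=> [/eqP->|Hlt]; first by rewrite ltnn eqxx; right.
left; rewrite Hlt; have := mem_nth 0 Hlt; rewrite mem_sort mem_undup => /mapP [c].
by rewrite mem_filter mem_iota => /andP[_ /andP[_ Hc]] ->; exists c.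
Qed.

Lemma sorted_Rperm_block s h : is_Rperm n lam s -> h.+1 < size q ->
  sorted ltn (take (nth 0 q h.+1 - nth 0 q h) (drop (nth 0 q h) s)).
Proof.
case=> _ incr Hh; apply/(sortedP 0) => i; rewrite size_take_min ltn_min => /andP[Hi _].
rewrite !nth_take ?(ltn_trans (ltnSn i)) // !nth_drop.
move: Hi (incr h Hh (nth 0 q h + i.+1) (nth 0 q h + i.+2)).
set a := nth 0 q h; set b := nth 0 q h.+1; rewrite !addnS !succnK => Hi.
by apply; lia.
Qed.

End Blocks.

Section YkeyInjective.
Variables (n : nat) (lam s t : seq nat).
Hypotheses (Rperm_s : is_Rperm n lam s) (Rperm_t : is_Rperm n lam t).
Hypothesis eq_Ykey : Ykey lam s = Ykey lam t.

Local Notation q := (qseq n lam).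

Let take_perm x : perm_eq x (iota 1 n) -> take n x = x.
Proof. by move=> Hx; rewrite take_oversize // (perm_size Hx) size_iota. Qed.

Lemma perm_take_qseq h : 0 < h < size q -> perm_eq (take (nth 0 q h) s) (take (nth 0 q h) t).
Proof.
case/nth_qseq => [[c Hc ->]|->]; first exact: perm_take_Ykey.
case: Rperm_s Rperm_t => [perm_s _] [perm_t _].
by rewrite !take_perm // (perm_trans perm_s) // perm_sym.
Qed.

Lemma take_qseq_eq h : h < size q -> take (nth 0 q h) s = take (nth 0 q h) t.
Proof.
elim: h => [|h IH] Hh; first by rewrite /qseq /= !take0.
have le_q : nth 0 q h <= nth 0 q h.+1.
  by apply: (sorted_leq_nth leq_trans leqnn 0 (sorted_qseq n lam)); rewrite ?inE // ltnW.
have := perm_take_qseq (h := h.+1); rewrite Hh => /(_ isT).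
rewrite -(subnKC le_q) !takeD IH ?(ltnW Hh) // perm_cat2l => perm_block; congr (_ ++ _).
apply: (irr_sorted_eq ltn_trans ltnn); rewrite ?sorted_Rperm_block //.
exact: perm_mem.
Qed.

Lemma Ykey_inj : s = t.
Proof.
have := take_qseq_eq (h := (size q).-1); rewrite nth_qseq_last /qseq /= size_rcons.
case: Rperm_s Rperm_t => [perm_s _] [perm_t _].
by rewrite !take_perm // => ->.
Qed.

End YkeyInjective.

Theorem fact6p1 (n : nat) (lam : seq nat) (T Y : seq (seq nat)) (pi : seq nat) :
  1 <= n -> is_partition n lam -> is_tab n lam T -> is_key n lam Y -> is_Rperm n lam pi ->
  (* (i) *)
  is_key n lam (scan T) /\
  (* (ii) *)
  (tab_le T (scan T) /\ scan Y = Y) /\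
  (* (iii) *)
  (in_D n lam pi (Ykey lam pi) /\
   forall U, in_D n lam pi U -> in_ideal n lam (Ykey lam pi) U) /\
  (* (iv) *)
  ((in_D n lam pi (Ykey lam pi) /\
    forall U, in_D n lam pi U -> tab_le (Ykey lam pi) U -> U = Ykey lam pi) /\
   forall M, in_D n lam pi M ->
     (forall U, in_D n lam pi U -> tab_le M U -> U = M) -> M = Ykey lam pi) /\
  (* (v) *)
  (forall sigma, is_Rperm n lam sigma ->
     (exists U, in_D n lam sigma U) /\ (forall U, in_D n lam sigma U -> is_tab n lam U)) /\
  (forall sigma tau, is_Rperm n lam sigma -> is_Rperm n lam tau -> sigma <> tau ->
     ~ (forall U, in_D n lam sigma U = in_D n lam tau U)).
Proof.
move=> _ /andP[/eqP size_lam _] HT HY [pi_perm _].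
have D_Ykey sigma : is_Rperm n lam sigma -> in_D n lam sigma (Ykey lam sigma).
  by case=> sigma_perm _; apply: Ykey_in_D.
have Ypi := Ykey_in_D size_lam pi_perm.
split; first exact: scan_is_key HT.
split; first by split; [apply: tab_le_scan HT | apply: scan_key HY].
split.
  by split=> // U HU; rewrite /in_ideal (tab_le_Ykey_of_D HU) andbT; case/andP: HU.
split.
  split=> [|M HM Hmax]; last by apply/esym/Hmax => //; apply: tab_le_Ykey_of_D HM.
  by split=> // U HU le_YU; apply: tab_le_anti; rewrite le_YU (tab_le_Ykey_of_D HU).
split=> [sigma Hsigma|sigma tau Hsigma Htau neq_st D_eq].
  by split=> [|U /andP[]//]; exists (Ykey lam sigma); apply: D_Ykey.
have le_st : tab_le (Ykey lam sigma) (Ykey lam tau).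
  by apply: (@tab_le_Ykey_of_D n lam); rewrite -D_eq D_Ykey.
have le_ts : tab_le (Ykey lam tau) (Ykey lam sigma).
  by apply: (@tab_le_Ykey_of_D n lam); rewrite D_eq D_Ykey.
by apply/neq_st/(Ykey_inj Hsigma Htau)/tab_le_anti; rewrite le_st le_ts.
Qed.
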